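(* The property $\mathrm{Split}(B_\Lambda,B_\Lambda)$ is hereditary: if a set of reals $X$ satisfies $\mathrm{Split}(B_\Lambda,B_\Lambda)$ and $Y\subseteq X$ is infinite, then $Y$ satisfies $\mathrm{Split}(B_\Lambda,B_\Lambda)$.
   Context: A set of reals is an infinite topological space homeomorphic to a subset of $\mathbb R$. A cover of a space $X$ is a family $\mathcal U$ of subsets of $X$ with $\bigcup\mathcal U=X$ such that $X\not\subseteq U$ for all $U\in\mathcal U$; it is a large cover if every $x\in X$ lies in infinitely many members of $\mathcal U$. $B_\Lambda$ is the collection of countable large covers of the space by Borel sets. A space satisfies $\mathrm{Split}(B_\Lambda,B_\Lambda)$ if every $\mathcal U\in B_\Lambda$ can be partitioned into two disjoint subfamilies each containing a subfamily belonging to $B_\Lambda$ (equivalently, each of which is itself a large cover). *)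

From mathcomp Require Import all_boot all_order all_algebra.
From mathcomp Require Import all_classical all_reals all_analysis.
Set Implicit Arguments. Unset Strict Implicit. Unset Printing Implicit Defensive.
Import numFieldTopology.Exports.
Local Open Scope classical_set_scope.

Section Defs.
Variable R : realType.

Definition Borel (A : set R) : Prop := <<s [set O : set R | open O] >> A.

Definition Borel_in (X A : set R) : Prop := exists B, Borel B /\ A = B `&` X.

Definition is_cover (X : set R) (U : set (set R)) : Prop :=
  (forall A, U A -> A `<=` X) /\ \bigcup_(A in U) A = X /\
  (forall A, U A -> ~ (X `<=` A)).

Definition large_cover (X : set R) (U : set (set R)) : Prop :=
  is_cover X U /\ forall x, X x -> infinite_set [set A | U A /\ A x].

Definition B_Lambda (X : set R) (U : set (set R)) : Prop :=
  countable U /\ (forall A, U A -> Borel_in X A) /\ large_cover X U.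

Definition Split_BL (X : set R) : Prop :=
  forall U, B_Lambda X U ->
    exists V W : set (set R),
      V `|` W = U /\ V `&` W = set0 /\
      (exists V', V' `<=` V /\ B_Lambda X V') /\
      (exists W', W' `<=` W /\ B_Lambda X W').

End Defs.

From mathcomp Require Import all_boot all_order all_algebra.
From mathcomp Require Import all_classical all_reals all_analysis.
Import numFieldTopology.Exports.
Local Open Scope classical_set_scope.

(* Enumerate a large countable Borel cover of Y injectively as (e n) and write
   e n = B n ∩ Y with B n Borel in R.  The sets (B n ∪ ~ ⋃_{m > n} B m) ∩ X form a
   large countable Borel cover of X: a point lying in only finitely many B m lies
   outside every late tail.  Every point of Y lies in infinitely many B m, so the
   trace of the n-th set on Y is exactly e n; hence a splitting of this cover of X
   traces back to a splitting of the cover of Y. *)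

Lemma finite_nat_bounded {S : set nat} : finite_set S ->
  exists N, forall n, S n -> (n < N)%N.
Proof.
move=> /finite_fsetP[s ->]; exists (\max_(i <- finmap.enum_fset s) i).+1.
by move=> n /= sn; rewrite ltnS; exact: (@leq_bigmax_seq nat _ xpredT id n).
Qed.

Lemma countable_infinite_enum {T : pointedType} {U : set T} :
  countable U -> infinite_set U -> exists e : nat -> T, injective e /\ U = range e.
Proof.
move=> cU iU; have /card_esym/pcard_eqP/bijPex[e [efun einj esurj]] := eq_card_nat cU iU.
exists e; split; first by move=> m n; apply: einj; rewrite in_setE.
apply/seteqP; split=> [x /esurj[n _ <-]|_ [n _ <-]]; first by exists n.
exact: efun.
Qed.

Lemma image_infinite {T U} {f : T -> U} {S : set T} :
  {in S &, injective f} -> infinite_set S -> infinite_set (f @` S).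
Proof. by move=> finj; rewrite (eq_finite_set (inj_card_eq finj)). Qed.

Section lift.
Context {T : Type} (B : nat -> set T).

Definition tail n := \bigcup_(m in [set m | (n < m)%N]) B m.

Definition lift n := B n `|` ~` tail n.

Lemma lift_infinitely_often x : infinite_set [set n | lift n x].
Proof.
have [finB|infB] := pselect (finite_set [set n | B n x]); last first.
  by apply: sub_infinite_set infB => n Bnx; left.
have [N BN] := finite_nat_bounded finB.
have infN : infinite_set (~` `I_N) by rewrite -setTD; exact: infinite_setD infinite_nat _.
apply: sub_infinite_set infN => n /negP; rewrite -leqNgt => Nn; right=> -[m /= nm Bmx].
by have := BN m Bmx; rewrite ltnNge (leq_trans Nn (ltnW nm)).
Qed.

Lemma lift_setI (Y : set T) : (forall y, Y y -> infinite_set [set n | B n y]) ->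
  forall n, lift n `&` Y = B n `&` Y.
Proof.
move=> BY n; apply/seteqP.
split=> [y [[Bny|ntail] Yy]|y [Bny Yy]]; [by []| |by split=> //; left].
exfalso; apply: (BY y Yy); apply: (sub_finite_set _ (finite_II n.+1)) => m Bmy /=.
by rewrite ltnNge; apply/negP => nm; apply: ntail; exists m.
Qed.

End lift.

Section Borel.
Variable R : realType.
(* [Borel] is, by conversion, measurability in the generated sigma-algebra, so the closure
   lemmas for measurable sets apply. *)
Local Notation BorelType := (g_sigma_algebraType [set O : set R | open O]).

Lemma Borel_lift (B : nat -> set R) :
  (forall n, Borel (B n)) -> forall n, Borel (lift B n).
Proof.
move=> BB n; apply: (@measurableU _ BorelType (B n)); first exact: BB.
apply: (@measurableC _ BorelType).
rewrite /tail bigcup_mkcond; apply: (@bigcupT_measurable _ BorelType) => m.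
by case: ifP => _; [exact: BB | exact: (@measurable0 _ BorelType)].
Qed.

End Borel.

Definition splits_BL {R : realType} (X : set R) (U : set (set R)) : Prop :=
  exists V W : set (set R),
    V `|` W = U /\ V `&` W = set0 /\
    (exists V', V' `<=` V /\ B_Lambda X V') /\
    (exists W', W' `<=` W /\ B_Lambda X W').

Lemma large_cover_infinite {R : realType} {X : set R} {U : set (set R)} :
  infinite_set X -> large_cover X U -> infinite_set U.
Proof.
move=> /infinite_setN0[x Xx] [_ lU].
by apply: sub_infinite_set (lU x Xx) => A [].
Qed.

Section trace.
Variables (R : realType) (X Y : set R).
Hypothesis YX : Y `<=` X.

Lemma B_Lambda_trace (V : set (set R)) : B_Lambda X V -> {in V &, injective (setI^~ Y)} ->
  (forall A, V A -> ~ Y `<=` A) -> B_Lambda Y (setI^~ Y @` V).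
Proof.
move=> [cV [bV [[subV [cupV _]] lV]]] trinj notY; split.
  exact: card_le_trans (card_image_le _ _) cV.
split.
  move=> _ [A /bV[B [bB ->]] <-]; exists B; split=> //.
  by rewrite -setIA (setIidr YX).
split; last first.
  move=> y Yy; have trinjp : {in [set A | V A /\ A y] &, injective (setI^~ Y)}.
    by move=> A B /set_mem[VA _] /set_mem[VB _]; apply: trinj; rewrite inE.
  apply: sub_infinite_set (image_infinite trinjp (lV y (YX _ Yy))).
  by move=> _ [A [VA Ay] <-]; split; [exists A|].
split; first by move=> _ [A _ <-] y [].
split; last by move=> _ [A VA <-] YA; apply: (notY A VA) => y /YA[].
apply/seteqP; split=> [y [_ [A _ <-] []]//|y Yy].
have : (\bigcup_(A in V) A) y by rewrite cupV; exact: YX.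
by case=> A VA Ay; exists (A `&` Y); [exists A|].
Qed.

Lemma splits_trace (L : set (set R)) : {in L &, injective (setI^~ Y)} ->
  (forall A, L A -> ~ Y `<=` A) -> splits_BL X L -> splits_BL Y (setI^~ Y @` L).
Proof.
move=> trinj notY [V [W [VWL [VW0 [[V' [V'V BV']] [W' [W'W BW']]]]]]].
have VL : V `<=` L by rewrite -VWL => A; left.
have WL : W `<=` L by rewrite -VWL => A; right.
have trace_sub (Z : set (set R)) : Z `<=` L -> B_Lambda X Z -> B_Lambda Y (setI^~ Y @` Z).
  move=> ZL BZ; apply: B_Lambda_trace => // [A B ZA ZB|A /ZL]; last exact: notY.
  by apply: trinj; rewrite inE; apply: ZL; rewrite -inE.
exists (setI^~ Y @` V), (setI^~ Y @` W); split; first by rewrite -image_setU VWL.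
split.
  apply/seteqP; split=> // _ [[A VA <-] [B WB BA]].
  have AB : A = B by apply: trinj; rewrite ?inE; [exact: VL|exact: WL|exact/esym].
  suff : (V `&` W) A by rewrite VW0.
  by split=> //; rewrite AB.
split; [exists (setI^~ Y @` V')|exists (setI^~ Y @` W')]; split.
- exact: image_subset.
- by apply: trace_sub => //; exact: subset_trans VL.
- exact: image_subset.
- by apply: trace_sub => //; exact: subset_trans WL.
Qed.

End trace.

Section extension.
Variables (R : realType) (X Y : set R) (e B : nat -> set R).
Hypotheses (YX : Y `<=` X) (BLe : B_Lambda Y (range e)) (einj : injective e).
Hypotheses (BB : forall n, Borel (B n)) (eB : forall n, e n = B n `&` Y).

Let extend n := lift B n `&` X.

Lemma B_infinitely_often y : Y y -> infinite_set [set n | B n y].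
Proof.
move=> Yy finB; case: BLe => _ [_ [_ /(_ y Yy)]]; apply.
have fine : finite_set [set n | e n y].
  by apply: sub_finite_set finB => n /=; rewrite eB => -[].
by apply: sub_finite_set (finite_image e fine) => _ [[n _ <-] eny]; exists n.
Qed.

Lemma extend_setI n : extend n `&` Y = e n.
Proof. by rewrite -setIA (setIidr YX) (lift_setI B Y B_infinitely_often) eB. Qed.

Lemma extend_inj : injective extend.
Proof. by move=> m n mn; apply: einj; rewrite -!extend_setI mn. Qed.

Lemma Y_not_subset_extend n : ~ Y `<=` extend n.
Proof.
move=> Yn; case: BLe => _ [_ [[_ [_ notY]] _]]; apply: (notY (e n)); first by exists n.
by rewrite -extend_setI => y Yy; split=> //; exact: Yn.
Qed.

Lemma B_Lambda_extend : B_Lambda X (range extend).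
Proof.
have lX x : X x -> infinite_set [set A | range extend A /\ A x].
  move=> Xx; have := image_infinite (in2W extend_inj) (lift_infinitely_often B x).
  by apply: sub_infinite_set => _ [n liftn <-]; split; [exists n|split].
split; first exact: (card_le_trans (card_image_le extend setT) (countableP [set: nat])).
split; first by move=> _ [n _ <-]; exists (lift B n); split=> //; exact: Borel_lift.
split=> //; split; [by move=> _ [n _ <-] x []|split].
  apply/seteqP; split=> [x [_ [n _ <-] []]//|x Xx].
  by have [A [ranA Ax]] := infinite_setN0 (lX x Xx); exists A.
by move=> _ [n _ <-] Xn; apply: (Y_not_subset_extend n) => y /YX; exact: Xn.
Qed.

Lemma splits_BL_range : Split_BL X -> splits_BL Y (range e).
Proof.
have -> : range e = setI^~ Y @` range extend.
  apply/seteqP; split=> [_ [n _ <-]|_ [_ [n _ <-] <-]].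
    by exists (extend n); [exists n|exact: extend_setI].
  by exists n => //; rewrite extend_setI.
move=> sX; apply: (@splits_trace _ X Y YX (range extend)); last exact: sX _ B_Lambda_extend.
  move=> _ _ /set_mem[m _ <-] /set_mem[n _ <-]; rewrite !extend_setI => /einj->//.
by move=> _ [n _ <-]; exact: Y_not_subset_extend.
Qed.

End extension.

Theorem theorem7p4 (R : realType) (X Y : set R) :
  infinite_set X -> Split_BL X -> Y `<=` X -> infinite_set Y -> Split_BL Y.
Proof.
move=> _ sX YX infY U BLU.
have [e [einj Ue]] := countable_infinite_enum BLU.1 (large_cover_infinite infY BLU.2.2).
rewrite Ue in BLU *.
have [B BeB] := @choice _ _ (fun n B => Borel B /\ e n = B `&` Y)
  (fun n => BLU.2.1 (e n) (imageT e n)).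
exact: splits_BL_range YX BLU einj (fun n => (BeB n).1) (fun n => (BeB n).2) sX.
Qed.
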